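(* For any integer $d\ge2$, any $\Gamma\in\mathcal{L}_d$ and any $Q\in\mathcal{R}_d$ we have $|\Gamma_0|\le 2d-2$, $|\Gamma_1|\le 3d-3$, $|Q_0|\le5(d-1)$ and $|Q_1|\le 6(d-1)$. In particular $\mathcal{L}_d$ and $\mathcal{R}_d$ are finite.
   Context: For an undirected multigraph $\Gamma$ (vertex set $\Gamma_0$, edge set $\Gamma_1$), $\chi(\Gamma)=|\Gamma_1|-|\Gamma_0|+(\text{number of connected components})$. A connected graph with at least one edge is prime if it is not the union of two full proper subgraphs having exactly one common vertex. $\mathcal{L}_d$ is the set of prime graphs $\Gamma$ with $\chi(\Gamma)=d$ in which every vertex has valency at least $3$. $\mathcal{R}_d$ is the set of quivers with no oriented cycles obtained from some $\Gamma\in\mathcal{L}_d$ by orienting some of the edges and putting a sink on each remaining edge (replacing it by a path of length two whose two arrows point towards the new middle vertex). *)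

From HB Require Import structures.
From mathcomp Require Import all_boot all_order all_algebra.
Set Implicit Arguments. Unset Strict Implicit. Unset Printing Implicit Defensive.
Import GRing.Theory Num.Theory.

(* Undirected multigraphs (loops and multiple edges allowed).  An edge e has
   the (unordered) pair of endpoints given by [ends e]; the order of the
   pair carries no meaning. *)
Record multigraph := Multigraph {
  gV : finType;
  gE : finType;
  ends : gE -> gV * gV }.

Definition adj (G : multigraph) : rel (gV G) :=
  fun u v => [exists e, (ends e == (u, v)) || (ends e == (v, u))].

Definition ncomp (G : multigraph) : nat := n_comp (@adj G) predT.

Definition chi (G : multigraph) : int :=
  (#|gE G|%:Z - #|gV G|%:Z + (ncomp G)%:Z)%R.

Definition connected (G : multigraph) : Prop :=
  forall u v : gV G, connect (@adj G) u v.

(* valency: number of edge-ends at v (a loop counts twice) *)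
Definition valency (G : multigraph) (v : gV G) : nat :=
  \sum_(e : gE G) (((ends e).1 == v) + ((ends e).2 == v)).

Definition in_full (G : multigraph) (A : {set gV G}) (e : gE G) : bool :=
  ((ends e).1 \in A) && ((ends e).2 \in A).

Definition one_point_union (G : multigraph) (A B : {set gV G}) : Prop :=
  [/\ A :|: B = setT,
      (forall e, in_full A e || in_full B e),
      A != setT, B != setT &
      #|A :&: B| = 1%N].

Definition prime_graph (G : multigraph) : Prop :=
  [/\ connected G, (#|gE G| > 0)%N &
      ~ exists A B : {set gV G}, one_point_union A B].

Definition in_L (d : int) (G : multigraph) : Prop :=
  [/\ prime_graph G, chi G = d & forall v : gV G, (3 <= valency v)%N].

Record quiver := Quiver {
  Q0 : finType;
  Q1 : finType;
  qsrc : Q1 -> Q0;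
  qtgt : Q1 -> Q0 }.

Definition has_oriented_cycle (Q : quiver) : Prop :=
  exists (a : Q1 Q) (p : seq (Q1 Q)),
    path (fun x y => qtgt x == qsrc y) a p /\ qtgt (last a p) = qsrc a.

(* The quiver obtained from G by putting a sink on each edge e with [sink e]
   and orienting every other edge e: from (ends e).1 to (ends e).2 if [dir e],
   and the other way otherwise. *)
Section Build.
Variables (G : multigraph) (sink : pred (gE G)) (dir : gE G -> bool).

Definition bQ0 : finType := (gV G + {e : gE G | sink e})%type.
Definition bQ1 : finType :=
  ({e : gE G | ~~ sink e} + ({e : gE G | sink e} * bool))%type.

Definition bsrc (a : bQ1) : bQ0 :=
  match a with
  | inl e => inl (if dir (val e) then (ends (val e)).1 else (ends (val e)).2)
  | inr (e, b) => inl (if b then (ends (val e)).1 else (ends (val e)).2)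
  end.

Definition btgt (a : bQ1) : bQ0 :=
  match a with
  | inl e => inl (if dir (val e) then (ends (val e)).2 else (ends (val e)).1)
  | inr (e, _) => inr e
  end.

Definition build_quiver : quiver := Quiver bsrc btgt.
End Build.

Definition quiver_iso (Q Q' : quiver) : Prop :=
  exists (f0 : Q0 Q -> Q0 Q') (f1 : Q1 Q -> Q1 Q'),
    [/\ bijective f0, bijective f1,
        forall a, qsrc (f1 a) = f0 (qsrc a) &
        forall a, qtgt (f1 a) = f0 (qtgt a)].

Definition in_R (d : int) (Q : quiver) : Prop :=
  ~ has_oriented_cycle Q /\
  exists (G : multigraph) (sink : pred (gE G)) (dir : gE G -> bool),
    in_L d G /\ quiver_iso (build_quiver sink dir) Q.

Definition graph_iso (G G' : multigraph) : Prop :=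
  exists (f0 : gV G -> gV G') (f1 : gE G -> gE G'),
    [/\ bijective f0, bijective f1 &
        forall e, ends (f1 e) = (f0 (ends e).1, f0 (ends e).2) \/
                  ends (f1 e) = (f0 (ends e).2, f0 (ends e).1)].

(* Handshake: every vertex has valency at least 3, so 3|Γ_0| <= 2|Γ_1|.  A
   graph with an edge has at least one component, so d = χ(Γ) gives
   |Γ_1| <= d - 1 + |Γ_0| <= d - 1 + 2|Γ_1|/3, i.e. |Γ_1| <= 3(d-1) and then
   |Γ_0| <= 2(d-1).  A quiver in R_d has |Γ_0| + s vertices and |Γ_1| + s
   arrows, s <= |Γ_1| being the number of sinks.  Finiteness follows because a
   graph or quiver of bounded size is isomorphic to one on vertices 'I_n0 and
   edges 'I_n1, of which there are finitely many. *)
From mathcomp Require Import all_boot all_order all_algebra.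
From mathcomp Require Import zify.

Lemma sum_valency (G : multigraph) : \sum_(v : gV G) valency v = 2 * #|gE G|.
Proof.
rewrite /valency exchange_big /= (eq_bigr (fun _ => 2)) ?sum_nat_const 1?mulnC //.
move=> e _.
have sum_eq1 (x : gV G) : \sum_(v : gV G) (x == v) = 1.
  by rewrite (bigD1 x) //= eqxx big1 // => v; rewrite eq_sym => /negbTE ->.
by rewrite big_split /= !sum_eq1.
Qed.

Lemma ncomp_gt0 (G : multigraph) (x : gV G) : (0 < ncomp G)%N.
Proof.
apply/card_gt0P; exists (fingraph.root (@adj G) x); rewrite inE /= andbT.
apply: roots_root; apply: sym_connect_sym => u v.
by apply: eq_existsb => e; rewrite orbC.
Qed.

Lemma card_le_chi (d : nat) (G : multigraph) :
  chi G = Posz d -> (forall v : gV G, 3 <= valency v) ->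
  (#|gV G| <= 2 * d - 2)%N /\ (#|gE G| <= 3 * d - 3)%N.
Proof.
rewrite /chi => chiG val3.
have handshake : (3 * #|gV G| <= 2 * #|gE G|)%N.
  by rewrite -sum_valency mulnC -sum_nat_const; apply: leq_sum.
have [E0|/card_gt0P [e _]] := posnP #|gE G|; first lia.
have := @ncomp_gt0 G (ends e).1; lia.
Qed.

Lemma card_build_quiver (G : multigraph) (sink : pred (gE G)) (dir : gE G -> bool) :
  #|Q0 (build_quiver sink dir)| = #|gV G| + #|sink| /\
  #|Q1 (build_quiver sink dir)| = #|gE G| + #|sink|.
Proof.
rewrite /= /bQ0 /bQ1 !card_sum card_prod card_bool !card_sig.
have -> : #|[pred e | sink e]| = #|sink| by apply: eq_card.
split; first by [].
have <- : #|sink| + #|[pred e | ~~ sink e]| = #|gE G| := cardC _.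
by rewrite [RHS]addnAC addnn -muln2 addnC.
Qed.

Lemma quiver_iso_card (Q Q' : quiver) :
  quiver_iso Q Q' -> #|Q0 Q| = #|Q0 Q'| /\ #|Q1 Q| = #|Q1 Q'|.
Proof.
by case=> f0 [f1 [bij0 bij1 _ _]]; rewrite (bij_eq_card bij0) (bij_eq_card bij1).
Qed.

Lemma L_bounds (d : nat) (G : multigraph) : in_L d%:Z G ->
  (#|gV G| <= 2 * d - 2)%N /\ (#|gE G| <= 3 * d - 3)%N.
Proof. by case=> _ chiG val3; apply: card_le_chi. Qed.

Lemma R_bounds (d : nat) (Q : quiver) : in_R d%:Z Q ->
  (#|Q0 Q| <= 5 * (d - 1))%N /\ (#|Q1 Q| <= 6 * (d - 1))%N.
Proof.
case=> _ [G [sink [dir [/L_bounds [cardV cardE] /quiver_iso_card [<- <-]]]]].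
have [-> ->] := @card_build_quiver G sink dir.
have := max_card sink; lia.
Qed.

(* A code (n0; n1; f) lists the endpoints of each edge 'I_n1 among 'I_n0. *)
Definition code := {n0 : nat & {n1 : nat & {ffun 'I_n1 -> 'I_n0 * 'I_n0}}}.

Definition graph_of_code (c : code) : multigraph :=
  let: existT n0 (existT n1 f) := c in @Multigraph 'I_n0 'I_n1 f.

Definition quiver_of_code (c : code) : quiver :=
  let: existT n0 (existT n1 f) := c in
  @Quiver 'I_n0 'I_n1 (fun a => (f a).1) (fun a => (f a).2).

Lemma bounded_codes_enum (B C : nat) : exists n (cs : 'I_n -> code),
  forall c : code, (projT1 c <= B)%N -> (projT1 (projT2 c) <= C)%N ->
  exists i, cs i = c.
Proof.
pose T := {a : 'I_B.+1 & {b : 'I_C.+1 & {ffun 'I_b -> 'I_a * 'I_a}}}.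
pose code_of (t : T) : code :=
  let: existT a (existT b f) := t in existT _ (val a) (existT _ (val b) f).
exists #|{: T}|, (fun i => code_of (enum_val i)) => -[n0 [n1 f]] /= n0B n1C.
pose t : T := existT _ (Ordinal (n0B : n0 < B.+1)%N)
  (existT (fun b : 'I_C.+1 => {ffun 'I_b -> 'I_n0 * 'I_n0})
     (Ordinal (n1C : n1 < C.+1)%N) f).
by exists (enum_rank t); rewrite enum_rankK.
Qed.

Lemma enum_rank_bij (T : finType) : bijective (@enum_rank T).
Proof. by exists enum_val; [exact: enum_rankK | exact: enum_valK]. Qed.

Definition graph_code (G : multigraph) : code :=
  existT _ #|gV G| (existT _ #|gE G|
    [ffun k => (enum_rank (ends (enum_val k)).1, enum_rank (ends (enum_val k)).2)]).

Definition quiver_code (Q : quiver) : code :=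
  existT _ #|Q0 Q| (existT _ #|Q1 Q|
    [ffun k => (enum_rank (qsrc (enum_val k)), enum_rank (qtgt (enum_val k)))]).

Lemma graph_iso_code (G : multigraph) : graph_iso G (graph_of_code (graph_code G)).
Proof.
exists enum_rank, enum_rank; split; try exact: enum_rank_bij.
by move=> e; left; rewrite /= ffunE enum_rankK.
Qed.

Lemma quiver_iso_code (Q : quiver) : quiver_iso Q (quiver_of_code (quiver_code Q)).
Proof.
exists enum_rank, enum_rank; split; try exact: enum_rank_bij;
  by move=> a; rewrite /= ffunE enum_rankK.
Qed.

Lemma bounded_graphs_finite (B C : nat) : exists n (Gs : 'I_n -> multigraph),
  forall G, (#|gV G| <= B)%N -> (#|gE G| <= C)%N -> exists i, graph_iso G (Gs i).
Proof.
have [n [cs csP]] := bounded_codes_enum B C.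
exists n, (graph_of_code \o cs) => G cardV cardE.
have [i csi] := csP (graph_code G) cardV cardE.
by exists i; rewrite /= csi; apply: graph_iso_code.
Qed.

Lemma bounded_quivers_finite (B C : nat) : exists n (Qs : 'I_n -> quiver),
  forall Q, (#|Q0 Q| <= B)%N -> (#|Q1 Q| <= C)%N -> exists i, quiver_iso Q (Qs i).
Proof.
have [n [cs csP]] := bounded_codes_enum B C.
exists n, (quiver_of_code \o cs) => Q cardV cardE.
have [i csi] := csP (quiver_code Q) cardV cardE.
by exists i; rewrite /= csi; apply: quiver_iso_code.
Qed.

Theorem proposition4p15 (d : nat) (hd : (2 <= d)%N) :
  (forall G : multigraph, in_L d%:Z G ->
     (#|gV G| <= 2 * d - 2)%N /\ (#|gE G| <= 3 * d - 3)%N) /\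
  (forall Q : quiver, in_R d%:Z Q ->
     (#|Q0 Q| <= 5 * (d - 1))%N /\ (#|Q1 Q| <= 6 * (d - 1))%N) /\
  (* finiteness (up to isomorphism) of L_d and R_d *)
  (exists (n : nat) (Gs : 'I_n -> multigraph),
     forall G, in_L d%:Z G -> exists i, graph_iso G (Gs i)) /\
  (exists (n : nat) (Qs : 'I_n -> quiver),
     forall Q, in_R d%:Z Q -> exists i, quiver_iso Q (Qs i)).
Proof.
split; first exact: L_bounds.
split; first exact: R_bounds.
split.
  have [n [Gs GsP]] := bounded_graphs_finite (2 * d - 2) (3 * d - 3).
  by exists n, Gs => G /L_bounds [cardV cardE]; apply: GsP.
have [n [Qs QsP]] := bounded_quivers_finite (5 * (d - 1)) (6 * (d - 1)).
by exists n, Qs => Q /R_bounds [cardV cardE]; apply: QsP.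
Qed.
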